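(* Assume no interference. Let $T$ be an identifying statistic with (diagonal) asymptotic covariance $\Sigma(\mathbf{A})=\mathrm{diag}(\sigma_{11}^2(\mathbf{A}),\dots,\sigma_{nn}^2(\mathbf{A}))$. Suppose the design's score function satisfies, for every agent $i$: (i) $\phi_i(Y^{obs}) = f(T_i(Y^{obs}))$ for some differentiable $f:\mathbb{R}\to\mathbb{R}$; (ii) the asymptotic variance of $\phi_i$ is constant, i.e. there is a constant $c>0$ with $f'(\chi(A_i))^2\sigma_{ii}^2(\mathbf{A}) = c$ for all agents $i$ and all action profiles $\mathbf{A}$; (iii) $\arg\max_{\alpha\in\mathcal{A}_i} f(\chi(\alpha)) = \arg\max_{\alpha\in\mathcal{A}_i}\chi(\alpha) = A_i^\star$. Then the design is incentive-compatible.
   Context: Setting: $n$ agents, $m$ units, complete randomization with $k=m/n$ units per agent; agent $i$ chooses action $A_i\in\mathcal{A}_i$, $\mathbf{A}=(A_1,\dots,A_n)$, $\mathbf{A}_{-i}$ the others' actions; observed outcomes $Y^{obs}\in\mathbb{R}^m$. Performance function $\chi:\mathcal{A}\to\mathbb{R}$, $\boldsymbol{\chi}(\mathbf{A})=(\chi(A_1),\dots,\chi(A_n))^\top$; natural action $A_i^\star=\arg\max_{\alpha\in\mathcal{A}_i}\chi(\alpha)$. Score function $\phi:\mathbb{R}^m\to\mathbb{R}^n$, winner $\arg\max_i\phi_i$. Identifying statistic: $T:\mathbb{R}^m\to\mathbb{R}^n$ with $\sqrt{k}(T(Y^{obs})-\boldsymbol{\chi}(\mathbf{A}))\to\mathcal{N}(0,\Sigma(\mathbf{A}))$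 in distribution as $k\to\infty$ for each fixed $\mathbf{A}$. No interference: a unit's outcome when assigned to agent $i$ depends only on $A_i$, so $\Sigma(\mathbf{A})$ is diagonal. Asymptotic incentive compatibility: if $\sqrt{k}(\phi(Y^{obs})-\mu(\mathbf{A}))\to\mathcal{N}(0,V(\mathbf{A}))$, the probability that agent $i$'s score exceeds agent $j$'s is approximated by $\Phi(\sqrt{k}(\mu_i-\mu_j)/(v_{ii}+v_{jj}-v_{ij}-v_{ji})^{1/2})$ ($\Phi$ the standard normal CDF); the design is incentive-compatible if for every $i$, every $j\neq i$, every $\mathbf{A}_{-i}$, $A_i^\star$ maximizes this approximate probability over $\alpha\in\mathcal{A}_i$ under profile $(\alpha,\mathbf{A}_{-i})$. *)

From Stdlib Require Import Reals Lra.
Open Scope R_scope.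

(* Agents are indexed by naturals i < n.  An action profile is a function
   nat -> Act; only its values at i < n matter. *)

Definition valid_profile {Act : Type} (n : nat) (ActSet : nat -> Act -> Prop)
  (A : nat -> Act) : Prop :=
  forall i, (i < n)%nat -> ActSet i (A i).

Definition deviate {Act : Type} (A : nat -> Act) (i : nat) (alpha : Act) : nat -> Act :=
  fun l => if Nat.eqb l i then alpha else A l.

(* "argmax_{alpha in S} g(alpha) = {a}": a is the unique maximiser of g on S. *)
Definition is_unique_argmax {Act : Type} (S : Act -> Prop) (g : Act -> R) (a : Act) : Prop :=
  S a /\ forall alpha, S alpha ->
    ((forall beta, S beta -> g beta <= g alpha) <-> alpha = a).

(* Normal approximation to P(phi_i > phi_j) with asymptotic mean mu and
   asymptotic covariance V (k = units per agent). *)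
Definition approx_win_prob (Phi : R -> R) (k : nat)
  (mu : nat -> R) (V : nat -> nat -> R) (i j : nat) : R :=
  Phi (sqrt (INR k) * (mu i - mu j) / sqrt (V i i + V j j - V i j - V j i)).

Definition incentive_compatible {Act : Type} (Phi : R -> R) (n : nat)
  (ActSet : nat -> Act -> Prop) (Astar : nat -> Act)
  (mu : (nat -> Act) -> nat -> R) (V : (nat -> Act) -> nat -> nat -> R) : Prop :=
  forall (k : nat), (1 <= k)%nat ->
  forall i j, (i < n)%nat -> (j < n)%nat -> j <> i ->
  forall A : nat -> Act, valid_profile n ActSet A ->
  forall alpha, ActSet i alpha ->
    approx_win_prob Phi k (mu (deviate A i alpha)) (V (deviate A i alpha)) i j
    <= approx_win_prob Phi k (mu (deviate A i (Astar i))) (V (deviate A i (Astar i))) i j.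

(* Delta method for phi_i = f(T_i): with sqrt k (T - chi(A)) -> N(0, Sigma(A)),
   sqrt k (phi - mu(A)) -> N(0, V(A)) where mu_i(A) = f(chi(A_i)) and
   V(A) = J Sigma(A) J^T, J = diag(f'(chi(A_1)), ..., f'(chi(A_n))). *)
Definition delta_mean {Act : Type} (f : R -> R) (chi : Act -> R)
  (A : nat -> Act) (i : nat) : R := f (chi (A i)).

Definition delta_cov {Act : Type} (df : R -> R) (chi : Act -> R)
  (Sigma : (nat -> Act) -> nat -> nat -> R) (A : nat -> Act) (i j : nat) : R :=
  df (chi (A i)) * Sigma A i j * df (chi (A j)).

(* The score phi_i = f(T_i) has asymptotic mean f(chi(A_i)), and by the delta method
   its asymptotic covariance is diagonal with constant diagonal c.  Hence the
   denominator sigma_ii + sigma_jj - sigma_ij - sigma_ji of the approximate winning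
   probability of i over j equals 2c whatever agent i does, so that probability is
   Phi applied to a positive multiple of f(chi(alpha)) - f(chi(A_j)).  Since Phi is
   increasing (its derivative is the normal density), agent i maximises it by
   maximising f o chi, i.e. by playing A_i^star. *)
From Stdlib Require Import Reals Lra.
Open Scope R_scope.

Lemma increasing_of_derivative_nonneg (g dg : R -> R) :
  (forall x, derivable_pt_lim g x (dg x)) -> (forall x, 0 <= dg x) -> increasing g.
Proof.
  intros Hg Hdg.
  pose (pr := fun x => exist (fun l => derivable_pt_abs g x l) _ (Hg x)
    : derivable_pt g x).
  apply (nonneg_derivative_1 g pr); intros x.
  rewrite (derive_pt_eq_0 g x (dg x) (pr x) (Hg x)); apply Hdg.
Qed.

Lemma gaussian_density_pos (x : R) : 0 < exp (- (x ^ 2) / 2) / sqrt (2 * PI).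
Proof.
  apply Rdiv_lt_0_compat; [apply exp_pos|].
  apply sqrt_lt_R0; pose proof PI_RGT_0; lra.
Qed.

Lemma unique_argmax_le {Act : Type} (S : Act -> Prop) (g : Act -> R) (a b : Act) :
  is_unique_argmax S g a -> S b -> g b <= g a.
Proof. intros [Ha Hmax] Hb; exact (proj2 (Hmax a Ha) eq_refl b Hb). Qed.

Lemma deviate_self {Act : Type} (A : nat -> Act) (i : nat) (alpha : Act) :
  deviate A i alpha i = alpha.
Proof. unfold deviate; now rewrite Nat.eqb_refl. Qed.

Lemma deviate_other {Act : Type} (A : nat -> Act) (i j : nat) (alpha : Act) :
  j <> i -> deviate A i alpha j = A j.
Proof. intros Hji; unfold deviate; now rewrite (proj2 (Nat.eqb_neq j i) Hji). Qed.

Lemma valid_profile_deviate {Act : Type} (n : nat) (ActSet : nat -> Act -> Prop)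
  (A : nat -> Act) (i : nat) (alpha : Act) :
  valid_profile n ActSet A -> ActSet i alpha ->
  valid_profile n ActSet (deviate A i alpha).
Proof.
  intros HA Halpha l Hl; unfold deviate.
  destruct (Nat.eqb_spec l i) as [->|_]; auto.
Qed.

Lemma approx_win_prob_le (Phi : R -> R) (k : nat) (mu mu' : nat -> R)
  (V V' : nat -> nat -> R) (i j : nat) (d : R) :
  increasing Phi -> 0 < d ->
  V i i + V j j - V i j - V j i = d -> V' i i + V' j j - V' i j - V' j i = d ->
  mu i - mu j <= mu' i - mu' j ->
  approx_win_prob Phi k mu V i j <= approx_win_prob Phi k mu' V' i j.
Proof.
  intros HPhi Hd HV HV' Hmu; unfold approx_win_prob; rewrite HV, HV'.
  apply HPhi; unfold Rdiv; apply Rmult_le_compat_r.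
  - left; apply Rinv_0_lt_compat, sqrt_lt_R0, Hd.
  - apply Rmult_le_compat_l; [apply sqrt_pos | exact Hmu].
Qed.

Lemma delta_cov_pair_variance {Act : Type} (df : R -> R) (chi : Act -> R)
  (Sigma : (nat -> Act) -> nat -> nat -> R) (A : nat -> Act) (i j : nat) (c : R) :
  Sigma A i j = 0 -> Sigma A j i = 0 ->
  df (chi (A i)) ^ 2 * Sigma A i i = c -> df (chi (A j)) ^ 2 * Sigma A j j = c ->
  let V := delta_cov df chi Sigma A in V i i + V j j - V i j - V j i = 2 * c.
Proof.
  intros Hij Hji Hi Hj; cbv zeta; unfold delta_cov; rewrite Hij, Hji.
  replace (2 * c) with (c + c) by ring; rewrite <- Hi at 1; rewrite <- Hj; ring.
Qed.

Theorem theorem2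
  (Act : Type) (n : nat) (ActSet : nat -> Act -> Prop)
  (chi : Act -> R) (Astar : nat -> Act)
  (* Phi is the standard normal CDF: Phi(0) = 1/2, Phi' = standard normal density *)
  (Phi : R -> R)
  (HPhi0 : Phi 0 = 1 / 2)
  (HPhi' : forall x, derivable_pt_lim Phi x (exp (- (x ^ 2) / 2) / sqrt (2 * PI)))
  (* asymptotic covariance of the identifying statistic T *)
  (Sigma : (nat -> Act) -> nat -> nat -> R)
  (* no interference: Sigma(A) is diagonal *)
  (Hdiag : forall A i j, (i < n)%nat -> (j < n)%nat -> i <> j -> Sigma A i j = 0)
  (* (i) phi_i = f(T_i) with f differentiable, f' = df *)
  (f df : R -> R)
  (Hf : forall x, derivable_pt_lim f x (df x))
  (* (ii) constant asymptotic variance of phi_i *)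
  (Hconst : exists c, 0 < c /\
     forall A, valid_profile n ActSet A ->
     forall i, (i < n)%nat -> (df (chi (A i))) ^ 2 * Sigma A i i = c)
  (* (iii) argmax of f o chi = argmax of chi = A_i^star *)
  (Hargchi : forall i, (i < n)%nat -> is_unique_argmax (ActSet i) chi (Astar i))
  (Hargf : forall i, (i < n)%nat ->
     is_unique_argmax (ActSet i) (fun a => f (chi a)) (Astar i)) :
  incentive_compatible Phi n ActSet Astar
    (delta_mean f chi) (delta_cov df chi Sigma).
Proof.
  destruct Hconst as [c [Hc Hcst]].
  assert (HPhi : increasing Phi).
  { apply (increasing_of_derivative_nonneg Phi _ HPhi'); intros x.
    left; apply gaussian_density_pos. }
  intros k Hk i j Hi Hj Hji A HA alpha Halpha.
  assert (Hstar : ActSet i (Astar i)) by apply (Hargf i Hi).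
  assert (Hvar : forall b, ActSet i b ->
    let V := delta_cov df chi Sigma (deviate A i b) in
    V i i + V j j - V i j - V j i = 2 * c).
  { intros b Hb; pose proof (valid_profile_deviate _ _ _ _ _ HA Hb) as Hv.
    apply delta_cov_pair_variance; auto. }
  apply (approx_win_prob_le _ _ _ _ _ _ _ _ (2 * c) HPhi);
    [lra | apply Hvar; exact Halpha | apply Hvar; exact Hstar |].
  unfold delta_mean; rewrite !deviate_self, !deviate_other by exact Hji.
  pose proof (unique_argmax_le _ _ _ _ (Hargf i Hi) Halpha); lra.
Qed.
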